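(* Let $p$ be an odd prime and $G$ a finite non-abelian $p$-group. If $C_G(\Phi(G))\not\leq\Phi(G)$, then $G$ has a non-inner automorphism of order $p$.
   Context: $\Phi(G)$ is the Frattini subgroup of $G$ and $C_G(\cdot)$ denotes the centralizer. *)

From mathcomp Require Import all_boot all_fingroup all_solvable.
Set Implicit Arguments.
Unset Strict Implicit.
Unset Printing Implicit Defensive.
Local Open Scope group_scope.

Definition inner_aut (gT : finGroupType) (G : {set gT}) (a : {perm gT}) : Prop :=
  exists2 g, g \in G & forall x, x \in G -> a x = x ^ g.

From mathcomp Require Import all_boot all_fingroup all_solvable.
Set Implicit Arguments.
Unset Strict Implicit.
Unset Printing Implicit Defensive.
Local Open Scope group_scope.

(* Let M be a maximal subgroup of G, g in G \ M, and u in Z(M) with u ^+ p = 1 and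
   (g * u) ^+ p = g ^+ p. Then m * g ^+ i |-> m * (g * u) ^+ i is an automorphism
   of order p of G fixing M pointwise, and it is inner only if u = [~ g, h] for some
   h in C_G(M). When g centralizes Phi(G) and p is odd, [~ u, g] is central, which
   gives (g * u) ^+ p = g ^+ p for free.
   If Z(G) is not contained in Phi(G), take g central outside Phi(G). Otherwise
   C_G(M) = Z(M), and if Z(M) <= Phi(G) any u of order p in Z(G) works. Otherwise
   it suffices to find u of order p in Z(M) that is not a commutator [~ g, h] with h
   in Z(M); if there is none, every element of Z(G) is a p-th power in Z(M).
   Applied to some a in Z(M) \ Phi(G) and a maximal M' not containing a, this gives
   b in Z(M') with b ^+ p = a ^+ p; then w = a * b^-1 has order p, lies outside
   Phi(G), and is central in its centralizer, which is maximal and misses a or g. *)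

Definition noninner_aut_of_order (gT : finGroupType) (G : {set gT}) (p : nat) :=
  exists2 a : {perm gT}, a \in Aut G & #[a] = p /\ ~ inner_aut G a.

Section CentralTwist.

Variables (gT : finGroupType) (G M : {group gT}) (p : nat) (g u : gT).
Hypotheses (pr_p : prime p) (nsMG : M <| G) (iMG : #|G : M| = p).
Hypotheses (Gg : g \in G) (notMg : g \notin M) (ZMu : u \in 'Z(M)).
Hypotheses (up1 : u ^+ p = 1) (gu_p : (g * u) ^+ p = g ^+ p).

Let sMG : M \subset G := normal_sub nsMG.
Let nMG : G \subset 'N(M) := normal_norm nsMG.
Let sub_MG m : m \in M -> m \in G := subsetP sMG m.
Let Mu : u \in M := subsetP (center_sub M) u ZMu.
Let Gu : u \in G := sub_MG Mu.

Lemma order_coset_gen : #[coset M g] = p.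
Proof.
apply/(prime_nt_dvdP pr_p).
  by rewrite order_eq1; apply: contra notMg => /eqP/coset_idr->; rewrite ?(subsetP nMG).
by rewrite -iMG -card_quotient //; apply: order_dvdG (mem_quotient _ Gg).
Qed.

Lemma dvdn_expg_gen j : g ^+ j \in M -> p %| j.
Proof.
move=> Mgj; rewrite -order_coset_gen order_dvdn -morphX ?(subsetP nMG) //.
by apply/eqP/coset_id.
Qed.

Lemma coset_expg_gen x : x \in G -> exists i : 'I_p, x * (g ^+ i)^-1 \in M.
Proof.
move=> Gx; have Nx y : y \in G -> y \in 'N(M) := subsetP nMG y.
have genG : <[coset M g]> = G / M.
  apply/eqP; rewrite eqEcard cycle_subG mem_quotient //=.
  by rewrite -orderE order_coset_gen card_quotient // iMG.
have /cyclePmin[i] : coset M x \in <[coset M g]> by rewrite genG mem_quotient.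
rewrite order_coset_gen => lt_ip Mxi; exists (Ordinal lt_ip).
apply: coset_idr; first by rewrite Nx // groupM ?groupV ?groupX.
by rewrite morphM ?morphV ?morphX ?Nx ?groupV ?groupX //= -Mxi mulgV.
Qed.

Lemma mulg_expg_gen x : x \in G -> exists2 m, m \in M & exists i, x = m * g ^+ i.
Proof.
by case/coset_expg_gen=> i Mxi; exists (x * (g ^+ i)^-1) => //; exists i; rewrite mulgKV.
Qed.

Definition twist_exp x : nat :=
  if [pick i : 'I_p | x * (g ^+ i)^-1 \in M] is Some i then i else 0.

Lemma twist_expP x : x \in G -> x * (g ^+ twist_exp x)^-1 \in M.
Proof.
move=> Gx; rewrite /twist_exp; case: pickP => [//| noexp].
by have [i Mxi] := coset_expg_gen Gx; have := noexp i; rewrite Mxi.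
Qed.

(* For x = m * g ^+ i with m in M, this is m * (g * u) ^+ i. *)
Definition twist x := x * (g ^+ twist_exp x)^-1 * (g * u) ^+ twist_exp x.

Lemma conjg_twist m k : m \in M -> m ^ (g * u) ^+ k = m ^ g ^+ k.
Proof.
move=> Mm; elim: k => [|k IHk]; first by rewrite !expg0.
rewrite !expgSr !conjgM IHk; apply/conjg_fixP/commgP/(centerC _ ZMu).
by rewrite !memJ_norm ?(subsetP nMG) ?groupX.
Qed.

Lemma expg_twist_dvdn j : p %| j -> (g * u) ^+ j = g ^+ j.
Proof. by move=> /divnK <-; rewrite mulnC !expgM gu_p. Qed.

Lemma twist_well_defined m m' i k : m \in M -> m' \in M ->
  m * g ^+ i = m' * g ^+ k -> m * (g * u) ^+ i = m' * (g * u) ^+ k.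
Proof.
wlog le_ki : m m' i k / k <= i.
  move=> IH Mm Mm' eq_mg; have [/IH|/ltnW/IH] := leqP k i; first exact.
  by move=> sym; symmetry; apply: sym.
move=> Mm Mm' eq_mg; rewrite -(subnK le_ki) !expgD !mulgA.
have def_m' : m * g ^+ (i - k) = m'.
  by apply: (mulIg (g ^+ k)); rewrite -mulgA -expgD subnK.
have Mgik : g ^+ (i - k) \in M by rewrite -(groupMl _ Mm) def_m'.
by rewrite (expg_twist_dvdn (dvdn_expg_gen Mgik)) def_m'.
Qed.

Lemma twistE m i : m \in M -> twist (m * g ^+ i) = m * (g * u) ^+ i.
Proof.
move=> Mm; have Gx : m * g ^+ i \in G by rewrite groupM ?groupX // sub_MG.
by apply: twist_well_defined; rewrite ?twist_expP ?mulgKV.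
Qed.

Lemma twist_id m : m \in M -> twist m = m.
Proof. by move=> Mm; have := twistE 0 Mm; rewrite !expg0 !mulg1. Qed.

Lemma twist_gen : twist g = g * u.
Proof. by have := twistE 1 (group1 M); rewrite !expg1 !mul1g. Qed.

Lemma twistM : {in G &, {morph twist : x y / x * y}}.
Proof.
move=> x y /mulg_expg_gen[m Mm [i ->]] /mulg_expg_gen[n Mn [j ->]].
pose n' := n ^ (g ^+ i)^-1.
have Mn' : n' \in M by rewrite memJ_norm ?(subsetP nMG) ?groupV ?groupX.
have gin : g ^+ i * n = n' * g ^+ i by rewrite conjgCV.
have guin : (g * u) ^+ i * n = n' * (g * u) ^+ i.
  by rewrite conjgCV -{1}(conjgKV (g ^+ i) n) -/n' -conjg_twist // conjgK.
have -> : m * g ^+ i * (n * g ^+ j) = m * n' * g ^+ (i + j).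
  by rewrite expgD !mulgA -(mulgA m (g ^+ i)) gin !mulgA.
by rewrite !twistE ?(groupM Mm Mn') // expgD !mulgA -(mulgA m ((g * u) ^+ i)) guin !mulgA.
Qed.

Canonical twist_morphism := Morphism twistM.

Lemma im_twist : twist_morphism @* G = G.
Proof.
apply/eqP; rewrite eqEsubset; apply/andP; split.
  apply/subsetP => _ /morphimP[_ _ /mulg_expg_gen[m Mm [i ->]] ->] /=.
  by rewrite twistE // groupM ?groupX ?groupM // sub_MG.
apply/subsetP => _ /mulg_expg_gen[m Mm [i ->]].
have Ggu' : g * u^-1 \in G by rewrite groupM ?groupV.
have Gm := sub_MG Mm.
apply/morphimP; exists (m * (g * u^-1) ^+ i); rewrite ?groupM ?groupX //.
rewrite morphM ?groupX //= morphX //= twist_id //.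
by rewrite morphM ?groupV //= twist_gen twist_id ?groupV // mulgK.
Qed.

Lemma injm_twist : 'injm twist_morphism.
Proof. by rewrite -card_im_injm im_twist. Qed.

Definition twist_aut := aut injm_twist im_twist.

Lemma twist_autE x : x \in G -> twist_aut x = twist x.
Proof. exact: autE. Qed.

Lemma twist_autX k :
  {in M, forall m, (twist_aut ^+ k) m = m} /\ (twist_aut ^+ k) g = g * u ^+ k.
Proof.
elim: k => [|k [IHM IHg]]; first by split=> [m _|]; rewrite expg0 perm1 ?mulg1.
split=> [m Mm|]; rewrite expgSr permM; first by rewrite IHM // twist_autE ?twist_id ?sub_MG.
rewrite IHg twist_autE ?groupM ?groupX // twistM ?groupX //= twist_gen twist_id ?groupX //.
by rewrite -mulgA -expgS.
Qed.

Lemma twist_autX_p : twist_aut ^+ p = 1.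
Proof.
have Aut_ap : twist_aut ^+ p \in Aut G by rewrite groupX ?Aut_aut.
apply/permP => x; rewrite perm1.
have [/mulg_expg_gen[m Mm [i ->]] | notGx] := boolP (x \in G); last first.
  exact: out_Aut Aut_ap notGx.
have := morphM (autm Aut_ap) (sub_MG Mm) (groupX i Gg); rewrite morphX //= !autmE.
by have [fixM ->] := twist_autX p; rewrite (fixM m Mm) up1 mulg1.
Qed.

Hypothesis twist_outer : forall h, h \in 'C_G(M) -> [~ g, h] != u.

Lemma twist_aut_noninner : ~ inner_aut G twist_aut.
Proof.
case=> h Gh inner_h.
have CMh : h \in 'C_G(M).
  rewrite inE Gh; apply/centP => m Mm; apply/commute_sym/commgP/conjg_fixP.
  by rewrite -inner_h ?twist_autE ?twist_id ?sub_MG.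
have /eqP[] := twist_outer CMh.
by rewrite commgEl -inner_h // twist_autE // twist_gen mulKg.
Qed.

Lemma noninner_aut_twist : noninner_aut_of_order G p.
Proof.
exists twist_aut; first exact: Aut_aut.
split; last exact: twist_aut_noninner.
apply/(prime_nt_dvdP pr_p); last by rewrite order_dvdn twist_autX_p.
rewrite order_eq1; apply/eqP => a1; apply: twist_aut_noninner.
by exists 1 => // x _; rewrite a1 perm1 conjg1.
Qed.

End CentralTwist.

Section MaximalSubgroups.

Variables (gT : finGroupType) (G : {group gT}).
Implicit Types (M K H : {group gT}) (x y : gT).

Lemma maximal_sub_eq M K x :
  maximal M G -> K \subset G -> M \subset K -> x \in K -> x \notin M -> K :=: G.
Proof.
case/maxgroupP=> _ maxM sKG sMK Kx notMx.
apply/eqP; apply: contraR notMx => neKG.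
by have <- // := maxM K; rewrite properEneq neKG.
Qed.

Lemma maximal_cent1_center M x y : maximal M G -> x \in G ->
  M \subset 'C[x] -> y \in 'C_G[x] -> y \notin M -> x \in 'Z(G).
Proof.
move=> maxM Gx sMCx CGxy notMy.
have sMCGx : M \subset 'C_G[x] by rewrite subsetI (proper_sub (maxgroupp maxM)).
have CGxG := maximal_sub_eq maxM (subsetIl _ _) sMCGx CGxy notMy.
apply/centerP; split=> // z Gz.
by have /subcent1P[] : z \in 'C_G[x] by rewrite CGxG.
Qed.

Lemma cent_maximal_sub_center M :
  maximal M G -> 'Z(G) \subset M -> 'C_G(M) \subset 'Z(M).
Proof.
move=> maxM sZM; apply/subsetP => h /setIP[Gh CMh].
suff Mh : h \in M by apply/setIP.
apply: contraT => notMh.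
have ZGh : h \in 'Z(G).
  by apply: maximal_cent1_center maxM Gh _ (subcent1_id Gh) notMh; rewrite sub_cent1.
by rewrite (subsetP sZM) in notMh.
Qed.

Lemma center_sub_center M : M \subset G -> 'Z(G) \subset M -> 'Z(G) \subset 'Z(M).
Proof.
by move=> sMG sZM; rewrite subsetI sZM (subset_trans (subsetIr _ _) (centS sMG)).
Qed.

Lemma center_maximal_sub_cent_Phi M : maximal M G -> 'Z(M) \subset 'C_G('Phi(G)).
Proof.
move=> maxM; apply/subsetP => x /setIP[Mx CMx].
rewrite inE (subsetP (proper_sub (maxgroupp maxM))) //=.
exact: subsetP (centS (Phi_sub_max maxM)) x CMx.
Qed.

Lemma center_subcent1 x : x \in G -> x \in 'Z('C_G[x]).
Proof.
move=> Gx; apply/centerP; split=> [|y /subcent1P[] //]; exact: subcent1_id.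
Qed.

Lemma notin_Phi_maximal x :
  x \in G -> x \notin 'Phi(G) -> exists2 M : {group gT}, maximal M G & x \notin M.
Proof.
move=> Gx notPx.
have [M /andP[maxM notMx] | noM] :=
  pickP [pred M : {group gT} | maximal M G && (x \notin M)].
  by exists M.
case/negP: notPx; apply/bigcapP => M /predU1P[-> // | maxM].
by move: (noM M); rewrite /= maxM => /negbFE.
Qed.

Lemma index_normal_mulg K H : K <| G -> K * H = G -> #|G : H| = #|K : K :&: H|.
Proof.
move=> nsKG defG.
have nKH : H \subset 'N(K).
  by apply: subset_trans (normal_norm nsKG); rewrite -defG mulG_subr.
by rewrite -defG -(normC nKH) indexMg indexgI.
Qed.

End MaximalSubgroups.

Lemma card_morphim_im_ker (aT rT : finGroupType) (A : {group aT})
    (f : {morphism A >-> aT}) (q : {morphism A >-> rT}) :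
  f @* A = 'ker q -> #|q @* A| = #|'ker f|.
Proof.
have cardA (r : finGroupType) (h : {morphism A >-> r}) : (#|'ker h| * #|h @* A|)%N = #|A|.
  by rewrite card_morphim setIid Lagrange // normal_sub ?ker_normal.
move=> im_f_ker_q; apply/eqP; rewrite -(eqn_pmul2l (cardG_gt0 ('ker q))) cardA.
by rewrite -(cardA _ f) im_f_ker_q mulnC.
Qed.

Lemma expMg_Rmul_odd (gT : finGroupType) (x y : gT) n :
  odd n -> commute x [~ y, x] -> commute y [~ y, x] ->
  (x * y) ^+ n = x ^+ n * y ^+ n * [~ y ^+ n, x] ^+ n.-1./2.
Proof. by move=> odd_n cxR cyR; rewrite expMg_Rmul // bin2odd // expgM commXg. Qed.

Section OddPGroup.

Variables (gT : finGroupType) (G : {group gT}) (p : nat).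
Hypotheses (pr_p : prime p) (odd_p : odd p) (pG : p.-group G).

Lemma commg_Phi x y : x \in G -> y \in G -> [~ x, y] \in 'Phi(G).
Proof.
move=> Gx Gy; rewrite (Phi_joing pG) mem_gen // inE.
by rewrite derg1 mem_commg.
Qed.

Lemma expg_Phi x : x \in G -> x ^+ p \in 'Phi(G).
Proof.
move=> Gx; rewrite (Phi_joing pG) mem_gen // inE orbC.
by have := Mho_p_elt 1 Gx (mem_p_elt pG Gx); rewrite expn1 => ->.
Qed.

Lemma center_order_prime (K : {group gT}) :
  K \subset G -> K :!=: 1 -> exists2 u, u \in 'Z(K) & #[u] = p.
Proof.
move=> sKG ntK; have pK := pgroupS sKG pG.
have ntZK : 'Z(K) != 1 by rewrite (center_nil_eq1 (pgroup_nil pK)).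
have [_ p_dv_Z _] := pgroup_pdiv (pgroupS (center_sub K) pK) ntZK.
by have [u] := Cauchy pr_p p_dv_Z; exists u.
Qed.

Lemma p_maximal_over_meet (M M' H : {group gT}) :
  maximal M G -> maximal M' G -> ~~ (M \subset M') ->
  M :&: M' \subset H -> H \proper G -> ~~ (H \subset M') -> maximal H G.
Proof.
move=> maxM maxM' notsMM' sMM'H /andP[sHG notsGH] notsHM'.
have nsM'G := p_maximal_normal pG maxM'.
have sMG := proper_sub (maxgroupp maxM).
apply: (p_index_maximal sHG); suff -> : #|G : H| = p by [].
apply/(prime_nt_dvdP pr_p); first by rewrite indexg_eq1.
rewrite -(p_maximal_index pG maxM).
rewrite (index_normal_mulg nsM'G (mulg_normal_maximal nsM'G maxM' sHG notsHM')).
rewrite (index_normal_mulg nsM'G (mulg_normal_maximal nsM'G maxM' sMG notsMM')).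
by apply: indexgS; rewrite /= subsetI subsetIl setIC.
Qed.

Section MaximalPair.

Variables (M : {group gT}) (g : gT).
Hypotheses (maxM : maximal M G) (Cg : g \in 'C_G('Phi(G))) (notMg : g \notin M).

Let Gg : g \in G := subsetP (subsetIl _ _) g Cg.
Let cPhig : g \in 'C('Phi(G)) := subsetP (subsetIr _ _) g Cg.
Let nsMG : M <| G := p_maximal_normal pG maxM.
Let sMG : M \subset G := normal_sub nsMG.
Let ZM_G x : x \in 'Z(M) -> x \in G :=
  fun ZMx => subsetP sMG x (subsetP (center_sub M) x ZMx).

Lemma center_max_commute x : x \in 'Z(M) -> commute x g -> x \in 'Z(G).
Proof.
move=> ZMx cxg; apply: maximal_cent1_center maxM (ZM_G ZMx) _ _ notMg.
  by rewrite sub_cent1; case/setIP: ZMx.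
by apply/subcent1P.
Qed.

Lemma center_max_Phi x : x \in 'Z(M) -> x \in 'Phi(G) -> x \in 'Z(G).
Proof.
by move=> ZMx Px; apply: center_max_commute => //; apply: commute_sym (centP cPhig x Px).
Qed.

Lemma commg_center_max x : x \in 'Z(M) -> [~ g, x] \in 'Z(G).
Proof.
move=> ZMx; apply: center_max_Phi; last exact: commg_Phi (ZM_G ZMx).
have nZMG : G \subset 'N('Z(M)) := normal_norm (char_normal_trans (center_char M) nsMG).
by rewrite commgEr groupM // memJ_norm ?groupV // (subsetP nZMG).
Qed.

Lemma expg_center_max x : x \in 'Z(M) -> x ^+ p \in 'Z(G).
Proof. by move=> ZMx; apply: center_max_Phi (groupX p ZMx) (expg_Phi (ZM_G ZMx)). Qed.

Lemma expg_mulg_center_max u : u \in 'Z(M) -> u ^+ p = 1 -> (g * u) ^+ p = g ^+ p.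
Proof.
move=> ZMu up1; have ZGc : [~ u, g] \in 'Z(G) by rewrite -invg_comm groupV commg_center_max.
rewrite expMg_Rmul_odd ?up1 ?comm1g ?expg1n ?mulg1 //; apply: centerC ZGc => //.
exact: ZM_G.
Qed.

Lemma noninner_of_center_max u : u \in 'Z(M) -> u ^+ p = 1 ->
  (forall h, h \in 'C_G(M) -> [~ g, h] != u) -> noninner_aut_of_order G p.
Proof.
move=> ZMu up1.
exact: noninner_aut_twist pr_p nsMG (p_maximal_index pG maxM) Gg notMg ZMu up1
  (expg_mulg_center_max ZMu up1).
Qed.

Lemma noninner_of_center_max_notin_Phi u :
  u \in 'Z(M) -> u ^+ p = 1 -> u \notin 'Phi(G) -> noninner_aut_of_order G p.
Proof.
move=> ZMu up1 notPu; apply: noninner_of_center_max ZMu up1 _ => h /setIP[Gh _].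
by apply: contraNneq notPu => <-; apply: commg_Phi.
Qed.

Hypothesis ZPhi : 'Z(G) \subset 'Phi(G).

Let sZM : 'Z(G) \subset M := subset_trans ZPhi (Phi_sub_max maxM).

Lemma noninner_of_center_max_sub_Phi :
  G :!=: 1 -> 'Z(M) \subset 'Phi(G) -> noninner_aut_of_order G p.
Proof.
move=> ntG sZMPhi; have [u ZGu ou] := center_order_prime (subxx G) ntG.
apply: (@noninner_of_center_max u).
- exact: subsetP (center_sub_center sMG sZM) u ZGu.
- by rewrite -ou expg_order.
move=> h /(subsetP (cent_maximal_sub_center maxM sZM)) /(subsetP sZMPhi) Ph.
have /commgP/eqP-> := centP cPhig h Ph.
by rewrite eq_sym -order_gt1 ou prime_gt1.
Qed.

Lemma commg_center_maxM : {in 'Z(M) &, {morph (fun h => [~ g, h]) : x y / x * y}}.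
Proof.
move=> x y ZMx ZMy /=; have ZGgx := commg_center_max ZMx; rewrite commgMJ.
have /commgP/conjg_fixP-> := commute_sym (centerC (ZM_G ZMy) ZGgx).
by apply: centerC ZGgx; apply/(subsetP (center_sub G))/commg_center_max.
Qed.

Lemma expg_center_maxM : {in 'Z(M) &, {morph (fun h => h ^+ p) : x y / x * y}}.
Proof.
by move=> x y ZMx ZMy /=; apply/expgMn/(centerC _ ZMy)/(subsetP (center_sub M)).
Qed.

(* By hypothesis h |-> [~ g, h] maps Z(M) onto the kernel of the p-power map of
   Z(M), and its own kernel is Z(G); so the image of the p-power map, which lies
   in Z(G), has order |Z(G)|. *)
Lemma expg_center_max_onto :
  (forall u, u \in 'Z(M) -> u ^+ p = 1 -> exists2 h, h \in 'Z(M) & [~ g, h] = u) ->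
  forall z, z \in 'Z(G) -> exists2 b, b \in 'Z(M) & b ^+ p = z.
Proof.
move=> commg_onto; have sZGZM := center_sub_center sMG sZM.
pose f := Morphism commg_center_maxM; pose q := Morphism expg_center_maxM.
have ker_f : 'ker f = 'Z(G).
  apply/setP => x; apply/idP/idP => [Kx | ZGx].
    have ZMx := subsetP (normal_sub (ker_normal f)) x Kx.
    apply: (center_max_commute ZMx); apply: commute_sym; apply/commgP/eqP.
    exact: (kerP f ZMx) Kx.
  apply/(kerP f (subsetP sZGZM x ZGx))/eqP/commgP.
  exact: (centerC Gg ZGx).
have im_f : f @* 'Z(M) = 'ker q.
  apply/setP => y; apply/idP/idP.
    case/morphimP=> x _ ZMx -> /=; have ZGgx := commg_center_max ZMx.
    apply/(kerP q (subsetP sZGZM _ ZGgx)) => /=.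
    rewrite -commgX; last exact: (centerC (ZM_G ZMx) ZGgx).
    by apply/eqP/commgP; apply: (centerC Gg (expg_center_max ZMx)).
  move=> Ky; have ZMy := subsetP (normal_sub (ker_normal q)) y Ky.
  have [h ZMh <-] := commg_onto y ZMy ((kerP q ZMy) Ky).
  by apply/morphimP; exists h.
have im_q : q @* 'Z(M) = 'Z(G).
  apply/eqP; rewrite eqEcard (card_morphim_im_ker im_f) ker_f leqnn andbT.
  by apply/subsetP => _ /morphimP[x _ ZMx ->]; apply: expg_center_max.
by move=> z; rewrite -im_q => /morphimP[b _ ZMb ->]; exists b.
Qed.

Lemma noninner_or_expg_center_max_onto : noninner_aut_of_order G p \/
  forall z, z \in 'Z(G) -> exists2 b, b \in 'Z(M) & b ^+ p = z.
Proof.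
have [/exists_inP[u ZMu /andP[/eqP up1 /forall_inP nocommg]] | allcommg] :=
  boolP [exists u in 'Z(M), (u ^+ p == 1) && [forall h in 'Z(M), [~ g, h] != u]].
  left; apply: noninner_of_center_max ZMu up1 _ => h.
  by move/(subsetP (cent_maximal_sub_center maxM sZM)); apply: nocommg.
right; apply: expg_center_max_onto => u ZMu up1.
move/exists_inPn/(_ u ZMu): allcommg; rewrite up1 eqxx /= negb_forall_in.
by case/exists_inP=> h ZMh /negbNE/eqP; exists h.
Qed.

End MaximalPair.

Lemma noninner_of_center_notin_Phi :
  ~~ abelian G -> ~~ ('Z(G) \subset 'Phi(G)) -> noninner_aut_of_order G p.
Proof.
move=> nabG /subsetPn[z ZGz notPz]; have Gz := subsetP (center_sub G) z ZGz.
have Cz : z \in 'C_G('Phi(G)).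
  by rewrite inE Gz (subsetP (centS (Phi_sub G))) //; case/setIP: ZGz.
have [M maxM notMz] := notin_Phi_maximal Gz notPz.
have sMG := proper_sub (maxgroupp maxM).
have ntM : M :!=: 1.
  apply: contraNneq nabG => M1; apply/cyclic_abelian/prime_cyclic.
  by rewrite -(Lagrange sMG) (p_maximal_index pG maxM) M1 cards1 mul1n.
have [u ZMu ou] := center_order_prime sMG ntM.
apply: (noninner_of_center_max maxM Cz notMz ZMu); first by rewrite -ou expg_order.
move=> h /setIP[Gh _]; have /commgP/eqP-> := commute_sym (centerC Gh ZGz).
by rewrite eq_sym -order_gt1 ou prime_gt1.
Qed.

Section TwoMaximals.

Variables (M M' : {group gT}) (a b : gT).
Hypotheses (maxM : maximal M G) (maxM' : maximal M' G) (ZPhi : 'Z(G) \subset 'Phi(G)).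
Hypotheses (ZMa : a \in 'Z(M)) (notM'a : a \notin M') (ZM'b : b \in 'Z(M')).
Hypothesis pow_ba : b ^+ p = a ^+ p.

Let Ma : a \in M := subsetP (center_sub M) a ZMa.
Let M'b : b \in M' := subsetP (center_sub M') b ZM'b.
Let Gb : b \in G := subsetP (proper_sub (maxgroupp maxM')) b M'b.
Let Ca : a \in 'C_G('Phi(G)) := subsetP (center_maximal_sub_cent_Phi maxM) a ZMa.
Let Ga : a \in G := subsetP (subsetIl _ _) a Ca.

Lemma expg_mulgV_eq1 : (a * b^-1) ^+ p = 1.
Proof.
have ZGc : [~ b^-1, a] \in 'Z(G).
  by rewrite -invg_comm groupV (commg_center_max maxM' Ca notM'a) ?groupV.
rewrite (expMg_Rmul_odd odd_p (centerC Ga ZGc) (centerC (groupVr Gb) ZGc)).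
rewrite expgVn pow_ba mulgV mul1g.
have /commgP/eqP-> := commute_sym (commuteV (commuteX p (commute_refl a))).
exact: expg1n.
Qed.

Lemma center_cent1_mulgV : a * b^-1 \in 'Z('C_G[a * b^-1]).
Proof. by apply/center_subcent1/groupM/groupVr. Qed.

Lemma mulgV_notin_max' : a * b^-1 \notin M'.
Proof. by rewrite groupMr ?groupV. Qed.

Lemma mulgV_notin_Phi : a * b^-1 \notin 'Phi(G).
Proof. exact: contra (subsetP (Phi_sub_max maxM') _) mulgV_notin_max'. Qed.

Lemma meet_sub_cent1_mulgV : M :&: M' \subset 'C_G[a * b^-1].
Proof.
apply/subsetP => y /setIP[My M'y]; apply/subcent1P.
split; first exact: subsetP (proper_sub (maxgroupp maxM)) y My.
apply/commute_sym/commuteM; first exact: (centerC My ZMa).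
exact/commuteV/(centerC M'y ZM'b).
Qed.

Lemma maximal_cent1_mulgV : maximal 'C_G[a * b^-1] G.
Proof.
apply: (p_maximal_over_meet maxM maxM' _ meet_sub_cent1_mulgV).
- by apply/subsetPn; exists a.
- rewrite properE subsetIl /=; apply: contra mulgV_notin_Phi => sGC.
  apply/(subsetP ZPhi)/centerP; split; first by rewrite groupM ?groupV.
  by move=> y /(subsetP sGC)/subcent1P[].
- apply/subsetPn; exists (a * b^-1); last exact: mulgV_notin_max'.
  by rewrite subcent1_id ?groupM ?groupV.
Qed.

Lemma max_sub_cent1_mulgV : a \in 'C_G[a * b^-1] -> M \subset 'C_G[a * b^-1].
Proof.
move=> Ca_ab; have sMG := proper_sub (maxgroupp maxM).
have nsM'G := p_maximal_normal pG maxM'.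
have notsMCM' : ~~ (M :&: 'C_G[a * b^-1] \subset M').
  by apply/subsetPn; exists a; rewrite // inE Ma.
have := group_modr M' (subsetIl M 'C_G[a * b^-1]).
rewrite (mulg_normal_maximal nsM'G maxM' _ notsMCM') ?(subset_trans (subsetIl _ _)) //.
rewrite (setIidPl sMG) => <-.
by rewrite mul_subG ?subsetIr ?meet_sub_cent1_mulgV.
Qed.

End TwoMaximals.

Lemma noninner_of_center_max_not_sub_Phi (M : {group gT}) g :
  maximal M G -> g \in 'C_G('Phi(G)) -> g \notin M ->
  'Z(G) \subset 'Phi(G) -> ~~ ('Z(M) \subset 'Phi(G)) -> noninner_aut_of_order G p.
Proof.
move=> maxM Cg notMg ZPhi /subsetPn[a ZMa notPa].
have Ca := subsetP (center_maximal_sub_cent_Phi maxM) a ZMa.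
have [M' maxM' notM'a] := notin_Phi_maximal (subsetP (subsetIl _ _) a Ca) notPa.
have [// | pth_roots] := noninner_or_expg_center_max_onto maxM' Ca notM'a ZPhi.
have [b ZM'b pow_ba] := pth_roots _ (expg_center_max maxM Cg notMg ZMa).
pose C := 'C_G[a * b^-1]%G.
have maxC : maximal C G := maximal_cent1_mulgV maxM maxM' ZPhi ZMa notM'a ZM'b.
have ZCab : a * b^-1 \in 'Z(C) := center_cent1_mulgV maxM maxM' ZMa ZM'b.
have abp := expg_mulgV_eq1 maxM maxM' ZMa notM'a ZM'b pow_ba.
have notPab := mulgV_notin_Phi maxM' notM'a ZM'b.
have [Ca_ab | notCa] := boolP (a \in C); last first.
  exact: (noninner_of_center_max_notin_Phi maxC Ca notCa ZCab abp notPab).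
have [Cg_ab | notCg] := boolP (g \in C); last first.
  exact: (noninner_of_center_max_notin_Phi maxC Cg notCg ZCab abp notPab).
have sMC := max_sub_cent1_mulgV maxM maxM' ZMa notM'a ZM'b Ca_ab.
have /properP[_ [x Gx notCx]] := maxgroupp maxC.
by rewrite (maximal_sub_eq maxM (subsetIl _ _) sMC Cg_ab notMg) Gx in notCx.
Qed.

End OddPGroup.

Theorem lemma2p4 (gT : finGroupType) (G : {group gT}) (p : nat) :
  prime p -> odd p -> p.-group G -> ~~ abelian G ->
  ~~ ('C_G('Phi(G)) \subset 'Phi(G)) ->
  exists2 a : {perm gT}, a \in Aut G & #[a] = p /\ ~ inner_aut G a.
Proof.
move=> pr_p odd_p pG nabG /subsetPn[g Cg notPg].
have [ZPhi | notZPhi] := boolP ('Z(G) \subset 'Phi(G)); last first.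
  exact: (noninner_of_center_notin_Phi pr_p odd_p pG nabG notZPhi).
have [M maxM notMg] := notin_Phi_maximal (subsetP (subsetIl _ _) g Cg) notPg.
have [ZMPhi | notZMPhi] := boolP ('Z(M) \subset 'Phi(G)); last first.
  exact: (noninner_of_center_max_not_sub_Phi pr_p odd_p pG maxM Cg notMg ZPhi notZMPhi).
apply: (noninner_of_center_max_sub_Phi pr_p odd_p pG maxM Cg notMg ZPhi _ ZMPhi).
by apply: contraNneq nabG => ->; apply: abelian1.
Qed.
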